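(* Let $G$ be any GP 2 host graph in which every node is marked grey and is not a root and every edge is unmarked, with $n$ nodes and $m$ edges. When the GP 2 program is-connected is executed on $G$ (via the GP 2-to-C compiler, under the cost model below), it terminates in time $\mathrm{O}(n+m)$, i.e. linear in the size of $G$.
   Context: GP 2 semantics. Host graphs are finite directed graphs (parallel edges and loops allowed); every node and edge carries a label (a list of integers and strings) and a mark: nodes are unmarked or red, green, blue or grey; edges are unmarked or red, green, blue or dashed. Some nodes are roots. A rule consists of a left-hand graph $L$ and a right-hand graph $R$ sharing an interface of nodes; labels may contain variables; a rule item with mark ''any'' matches any mark. A rule is applied by finding an injective morphism from $L$ into the host graph compatible with labels and marks, mapping roots of $L$ to roots, satisfying the dangling condition and the rule's condition, then modifying the matched items as prescribed by $R$. Commands: a rule set call applies one applicable rule and fails if none applies; $P;Q$ is sequencing; $P!$ iterates $P$ until it fails (returning the graph on which $P$ was last entered; break exits the loop); ''try $C$ then $P$ else $Q$'' runs $C$ and continues with $P$ on its result if it succeeded, else runs $Q$ on the original graph; ''if $C$ then $P$ else $Q$'' runs $C$ on a copy then $P$ or $Q$ on the original; fail causes failure. Cost model (updated GP 2-to-C compiler). The generated code stores host nodes in separate linked lists per node mark, keeps a list of roots, and for each node stores a two-dimensional array of linked lists of incident edges indexed by edge mark (unmarked, dashed, red, green, blue) and orientation (incoming, outgoing, loop). Each of the following elementary operations takes constant time: fetch the first/next host node with a given mark; fetch the first/next root node; given a node, fetch the first/next incoming, outgoing or loop edge with a given mark; read in-degree, out-degree, mark, root status, source, target; set/clear/test a ''matched''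 flag. Rule matching is a search using these operations; once a match is found, completing a rule application (for rules that only change marks, roots or add host labels) takes constant time. Running time is the total cost of all operations performed; the size of $G$ is $n+m$. The program is-connected (variables x,y,z of type list; labels unchanged by all rules): Main = try init then (DFS!; Check); DFS = FORWARD!; try back else break; FORWARD = next_edge; {move, ignore}; Check = if match then fail. Rule edges between nodes 1 and 2 match host edges in either direction. - init: a grey non-root node becomes a blue root. - match: a grey node; no change. - next_edge: blue root 1, node 2 of any mark, unmarked edge between them; edge becomes red. - ignore: blue root 1, blue node 2, red edge between; edge becomes blue. - move: blue root 1, grey node 2, red edge between; node 1 becomes a blue non-root, node 2 a blue root, edge dashed. - back: blue non-root 1, blue root 2, dashed edge between; node 1 becomes a root, node 2 a non-root (both blue), edge blue. *)

From mathcomp Require Import all_boot.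
From Stdlib Require ZArith String.

Set Implicit Arguments.
Unset Strict Implicit.
Unset Printing Implicit Defensive.

Inductive atom := AInt (z : BinNums.Z) | AStr (s : String.string).
Definition label := list atom.

Inductive nmark := NUnmarked | NRed | NGreen | NBlue | NGrey.
Inductive emark := EUnmarked | EDashed | ERed | EGreen | EBlue.

Definition nmark_eqb (a b : nmark) : bool :=
  match a, b with
  | NUnmarked, NUnmarked | NRed, NRed | NGreen, NGreen
  | NBlue, NBlue | NGrey, NGrey => true
  | _, _ => false
  end.
Definition emark_eqb (a b : emark) : bool :=
  match a, b with
  | EUnmarked, EUnmarked | EDashed, EDashed | ERed, ERed
  | EGreen, EGreen | EBlue, EBlue => true
  | _, _ => false
  end.

Record hnode := HNode { nmk : nmark; nroot : bool; nlab : label }.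
Record hedge := HEdge { esrc : nat; etgt : nat; emk : emark; elab : label }.

(* Nodes are 0 .. size hnodes - 1, edges are 0 .. size hedges - 1.
   Parallel edges and loops are allowed. *)
Record hgraph := HGraph { hnodes : seq hnode; hedges : seq hedge }.

Definition dnode := HNode NUnmarked false nil.
Definition dedge := HEdge 0 0 EUnmarked nil.
Definition nd (G : hgraph) (v : nat) : hnode := nth dnode (hnodes G) v.
Definition ed (G : hgraph) (e : nat) : hedge := nth dedge (hedges G) e.
Definition nn (G : hgraph) : nat := size (hnodes G).
Definition ne (G : hgraph) : nat := size (hedges G).

Definition wf_graph (G : hgraph) : bool :=
  all (fun x => (esrc x < nn G) && (etgt x < nn G)) (hedges G).

(* Storage of the generated C code: per-mark node lists, root list,     *)
(* per node / edge mark / orientation incidence lists.  (Enumeration    *)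

Definition mark_list (G : hgraph) (k : nmark) : seq nat :=
  [seq v <- iota 0 (nn G) | nmark_eqb (nmk (nd G v)) k].
Definition root_list (G : hgraph) : seq nat :=
  [seq v <- iota 0 (nn G) | nroot (nd G v)].
Definition out_list (G : hgraph) (v : nat) (k : emark) : seq nat :=
  [seq e <- iota 0 (ne G) | [&& esrc (ed G e) == v, etgt (ed G e) != v
                              & emark_eqb (emk (ed G e)) k]].
Definition in_list (G : hgraph) (v : nat) (k : emark) : seq nat :=
  [seq e <- iota 0 (ne G) | [&& etgt (ed G e) == v, esrc (ed G e) != v
                              & emark_eqb (emk (ed G e)) k]].

(* Iterating over a storage list: each fetch of a first/next element
   costs 1 (including the final fetch returning null); the body returns
   a possible match and its own cost. *)
Fixpoint search (A : Type) (l : seq nat) (f : nat -> option A * nat)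
  : option A * nat :=
  match l with
  | [::] => (None, 1)
  | x :: l' =>
      let '(r, c) := f x in
      match r with
      | Some a => (Some a, 1 + c)
      | None => let '(r', c') := search l' f in (r', 1 + c + c')
      end
  end.

(* Search plan for a rule with a root node 1 (marked according to pr),
   an edge of mark k between node 1 and node 2 (either direction), and a
   node 2 satisfying p: fetch roots, test mark, walk the incident edges
   of mark k (outgoing, then incoming); for each edge read the other
   endpoint, test the matched flag (injectivity), read mark / root. *)
Definition edge_search (G : hgraph) (r : nat) (k : emark) (p : hnode -> bool)
  : option (nat * nat * nat) * nat :=
  let body (out : bool) (e : nat) :=
    let w := if out then etgt (ed G e) else esrc (ed G e) in
    (if (w != r) && p (nd G w) then Some (r, w, e) else None, 4) in
  let '(r1, c1) := search (out_list G r k) (body true) in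
  match r1 with
  | Some x => (Some x, c1)
  | None => let '(r2, c2) := search (in_list G r k) (body false) in (r2, c1 + c2)
  end.

Definition root_edge_search (G : hgraph) (pr : hnode -> bool) (k : emark)
  (p : hnode -> bool) : option (nat * nat * nat) * nat :=
  search (root_list G) (fun r =>
    let '(res, c) := if pr (nd G r) then edge_search G r k p else (None, 0) in
    (res, 2 + c)).

Definition node_search (G : hgraph) (k : nmark) : option nat * nat :=
  search (mark_list G k) (fun v => (Some v, 2)).

Definition set_node (G : hgraph) (v : nat) (k : nmark) (rt : bool) : hgraph :=
  HGraph (set_nth dnode (hnodes G) v (HNode k rt (nlab (nd G v)))) (hedges G).
Definition set_edge (G : hgraph) (e : nat) (k : emark) : hgraph :=
  let x := ed G e in
  HGraph (hnodes G) (set_nth dedge (hedges G) e (HEdge (esrc x) (etgt x) k (elab x))).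

(* The rules of is-connected.  A non-root node of L may match any host  *)
(* node; root nodes of L must match roots.  Variables match any label.  *)

Inductive rname := R_init | R_match | R_next_edge | R_ignore | R_move | R_back.

Definition is_blue (x : hnode) : bool := nmark_eqb (nmk x) NBlue.
Definition is_grey (x : hnode) : bool := nmark_eqb (nmk x) NGrey.

(* Result: Some G' if the rule applied (graph after application), and the
   cost (matching cost + 1 for completing the application). *)
Definition try_rule (rl : rname) (G : hgraph) : option hgraph * nat :=
  match rl with
  | R_init =>
      let '(r, c) := node_search G NGrey in
      match r with Some v => (Some (set_node G v NBlue true), c + 1) | None => (None, c) end
  | R_match =>
      let '(r, c) := node_search G NGrey in
      match r with Some _ => (Some G, c + 1) | None => (None, c) end
  | R_next_edge =>
      let '(r, c) := root_edge_search G is_blue EUnmarked (fun _ => true) in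
      match r with
      | Some (_, _, e) => (Some (set_edge G e ERed), c + 1)
      | None => (None, c) end
  | R_ignore =>
      let '(r, c) := root_edge_search G is_blue ERed is_blue in
      match r with
      | Some (_, _, e) => (Some (set_edge G e EBlue), c + 1)
      | None => (None, c) end
  | R_move =>
      let '(r, c) := root_edge_search G is_blue ERed is_grey in
      match r with
      | Some (v1, v2, e) =>
          (Some (set_edge (set_node (set_node G v1 NBlue false) v2 NBlue true) e EDashed),
           c + 1)
      | None => (None, c) end
  | R_back =>
      (* blue node 1, blue root 2, dashed edge: 1 becomes root, 2 non-root,
         edge blue.  Search starts at the root (rule node 2). *)
      let '(r, c) := root_edge_search G is_blue EDashed is_blue in
      match r with
      | Some (v2, v1, e) =>
          (Some (set_edge (set_node (set_node G v1 NBlue true) v2 NBlue false) e EBlue),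
           c + 1)
      | None => (None, c) end
  end.

Inductive cmd :=
  | CCall of seq rname
  | CSeq of cmd & cmd
  | CLoop of cmd
  | CTry of cmd & cmd & cmd
  | CIf of cmd & cmd & cmd
  | CSkip | CFail | CBreak.

(* Outcomes carry the number of rule applications performed (the changes
   recorded by the compiled code, to be undone on backtracking). *)
Inductive outcome :=
  | OOk of hgraph & nat
  | OFail of nat
  | OBrk of hgraph & nat.

Definition add_changes (u : nat) (o : outcome) : outcome :=
  match o with
  | OOk G k => OOk G (u + k)
  | OFail k => OFail (u + k)
  | OBrk G k => OBrk G (u + k)
  end.

Fixpoint call (rs : seq rname) (G : hgraph) : outcome * nat :=
  match rs with
  | [::] => (OFail 0, 1)
  | rl :: rs' =>
      let '(r, c) := try_rule rl G in
      match r with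
      | Some G' => (OOk G' 1, 1 + c)
      | None => let '(o, c') := call rs' G in (o, c + c')
      end
  end.

(* Each command step costs 1; undoing u recorded changes
   when backtracking (failed loop body, failed try condition, condition
   of if) costs u. *)
Fixpoint eval (fuel : nat) (c : cmd) (G : hgraph) : option (outcome * nat) :=
  match fuel with
  | 0 => None
  | fuel'.+1 =>
    match c with
    | CCall rs => let '(o, k) := call rs G in Some (o, 1 + k)
    | CSkip => Some (OOk G 0, 1)
    | CFail => Some (OFail 0, 1)
    | CBreak => Some (OBrk G 0, 1)
    | CSeq P Q =>
        match eval fuel' P G with
        | Some (OOk G1 u1, c1) =>
            match eval fuel' Q G1 with
            | Some (o, c2) => Some (add_changes u1 o, 1 + c1 + c2)
            | None => None end
        | Some (o, c1) => Some (o, 1 + c1)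
        | None => None
        end
    | CLoop P =>
        match eval fuel' P G with
        | Some (OOk G1 u1, c1) =>
            match eval fuel' (CLoop P) G1 with
            | Some (o, c2) => Some (add_changes u1 o, 1 + c1 + c2)
            | None => None end
        | Some (OFail u, c1) => Some (OOk G 0, 1 + c1 + u)
        | Some (OBrk G1 u, c1) => Some (OOk G1 u, 1 + c1)
        | None => None
        end
    | CTry C P Q =>
        match eval fuel' C G with
        | Some (OOk G1 u1, c1) =>
            match eval fuel' P G1 with
            | Some (o, c2) => Some (add_changes u1 o, 1 + c1 + c2)
            | None => None end
        | Some (OFail u, c1) =>
            match eval fuel' Q G with
            | Some (o, c2) => Some (o, 1 + c1 + u + c2)
            | None => None end
        | Some (o, c1) => Some (o, 1 + c1)
        | None => None
        end
    | CIf C P Q =>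
        match eval fuel' C G with
        | Some (OOk _ u, c1) =>
            match eval fuel' P G with
            | Some (o, c2) => Some (o, 1 + c1 + u + c2)
            | None => None end
        | Some (OFail u, c1) =>
            match eval fuel' Q G with
            | Some (o, c2) => Some (o, 1 + c1 + u + c2)
            | None => None end
        | Some (o, c1) => Some (o, 1 + c1)
        | None => None
        end
    end
  end.

Definition FORWARD : cmd := CSeq (CCall [:: R_next_edge]) (CCall [:: R_move; R_ignore]).
Definition DFS : cmd := CSeq (CLoop FORWARD) (CTry (CCall [:: R_back]) CSkip CBreak).
Definition Check : cmd := CIf (CCall [:: R_match]) CFail CSkip.
Definition is_connected : cmd := CTry (CCall [:: R_init]) (CSeq (CLoop DFS) Check) CSkip.

Definition all_grey_unrooted_unmarked (G : hgraph) : bool :=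
  all (fun x => nmark_eqb (nmk x) NGrey && ~~ nroot x) (hnodes G) &&
  all (fun x => emark_eqb (emk x) EUnmarked) (hedges G).

(* The depth-first search maintains three facts: there is at most one root (the
   current DFS node), at most one red edge, and every dashed edge (an edge of the
   DFS path) has blue endpoints.  Under this invariant each rule is matched in
   constant time: the root list has one entry, and the first edge met when scanning
   an incidence list either matches or is the only candidate.  Every successful
   iteration of FORWARD! or DFS! decreases the potential 2 #unmarked + #dashed, so
   the cost of the loops is linear in the number of edges. *)

From mathcomp Require Import all_boot zify.

Set Implicit Arguments.
Unset Strict Implicit.
Unset Printing Implicit Defensive.

Arguments try_rule : simpl never.

Lemma emark_eqbP a b : emark_eqb a b -> a = b.
Proof. by case: a; case: b. Qed.

Lemma count_nth_iota T (x0 : T) (s : seq T) (q : pred T) :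
  count (fun i => q (nth x0 s i)) (iota 0 (size s)) = count q s.
Proof. by rewrite -{3}(mkseq_nth x0 s) /mkseq count_map. Qed.

(** * Search plans *)

Lemma search_cost A (l : seq nat) (f : nat -> option A * nat) B :
  (forall x, (f x).2 <= B) ->
  size l <= 1 \/ {in l, forall x, (f x).1 <> None} ->
  (search l f).2 <= B + 2.
Proof.
case: l => [|x l] /= f_le hit; first lia.
have := f_le x; case fx: (f x) => [[a|] c] /= c_le; first lia.
case: hit => [|/(_ x (mem_head _ _))]; last by rewrite fx.
by case: l => //= _; lia.
Qed.

Lemma search_some A l (f : nat -> option A * nat) a c :
  search l f = (Some a, c) -> exists2 x, x \in l & (f x).1 = Some a.
Proof.
elim: l c => [|x l IH] c //=.
case fx: (f x) => [[b|] c1] => [[<- _]|]; first by exists x; rewrite ?mem_head ?fx.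
case E: (search l f) => [r c'] [r_eq _]; rewrite r_eq in E.
by have [y y_l fy] := IH _ E; exists y; rewrite // in_cons y_l orbT.
Qed.

Definition edge_count G k := count (fun x => emark_eqb (emk x) k) (hedges G).

Definition joins (x : hedge) v w :=
  (esrc x == v) && (etgt x == w) || (etgt x == v) && (esrc x == w).

Lemma mem_out_list G r k e : e \in out_list G r k ->
  [/\ e < ne G, esrc (ed G e) = r, etgt (ed G e) != r & emark_eqb (emk (ed G e)) k].
Proof. by rewrite mem_filter mem_iota => /andP[/and3P[/eqP-> -> ->] /andP[_ ->]]. Qed.

Lemma mem_in_list G r k e : e \in in_list G r k ->
  [/\ e < ne G, etgt (ed G e) = r, esrc (ed G e) != r & emark_eqb (emk (ed G e)) k].
Proof. by rewrite mem_filter mem_iota => /andP[/and3P[/eqP-> -> ->] /andP[_ ->]]. Qed.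

Lemma size_out_list G r k : size (out_list G r k) <= edge_count G k.
Proof.
rewrite size_filter /edge_count -(count_nth_iota dedge).
by apply: sub_count => e /and3P[].
Qed.

Lemma size_in_list G r k : size (in_list G r k) <= edge_count G k.
Proof.
rewrite size_filter /edge_count -(count_nth_iota dedge).
by apply: sub_count => e /and3P[].
Qed.

Lemma size_root_list G : size (root_list G) = count nroot (hnodes G).
Proof. by rewrite size_filter count_nth_iota. Qed.

(* Under either alternative, a scan of an incidence list of k-edges never goes
   past its first entry. *)
Definition edge_search_immediate G k (p : hnode -> bool) :=
  edge_count G k <= 1 \/
  forall e, e < ne G -> emark_eqb (emk (ed G e)) k ->
    p (nd G (esrc (ed G e))) && p (nd G (etgt (ed G e))).

Lemma edge_search_cost G r k p :
  edge_search_immediate G k p -> (edge_search G r k p).2 <= 12.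
Proof.
move=> quick; rewrite /edge_search.
set s1 := search (out_list G r k) _; set s2 := search (in_list G r k) _.
have s1_le : s1.2 <= 6.
  apply: (@search_cost _ _ _ 4) => //; case: quick => [few | all_p]; [left | right].
    exact: leq_trans (size_out_list G r k) few.
  move=> e /mem_out_list[e_lt _ tgt_ne ek] /=.
  by have /andP[_ ->] := all_p e e_lt ek; rewrite tgt_ne.
have s2_le : s2.2 <= 6.
  apply: (@search_cost _ _ _ 4) => //; case: quick => [few | all_p]; [left | right].
    exact: leq_trans (size_in_list G r k) few.
  move=> e /mem_in_list[e_lt _ src_ne ek] /=.
  by have /andP[-> _] := all_p e e_lt ek; rewrite src_ne.
case: s1 s1_le => [[x|] c1] /= c1_le; first lia.
by case: s2 s2_le => [r2 c2] /=; lia.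
Qed.

Lemma edge_search_spec G r k p r' w e c :
  edge_search G r k p = (Some (r', w, e), c) ->
  [/\ r' = r, w != r, e < ne G & emark_eqb (emk (ed G e)) k && joins (ed G e) r w].
Proof.
rewrite /edge_search /=.
case E1: (search (out_list G r k) _) => [[y|] c1].
  case=> y_eq _; subst y; have [x /mem_out_list[x_lt src tgt_ne xk]] := search_some E1.
  case: ifP => // /andP[w_ne _] [<- <- <-].
  by rewrite /joins src tgt_ne xk !eqxx.
case E2: (search (in_list G r k) _) => [[y|] c2] // [y_eq _]; subst y.
have [x /mem_in_list[x_lt tgt src_ne xk]] := search_some E2.
case: ifP => // /andP[w_ne _] [<- <- <-].
by rewrite /joins tgt src_ne xk !eqxx orbT.
Qed.

Lemma root_edge_search_cost G pr k p :
  count nroot (hnodes G) <= 1 -> edge_search_immediate G k p ->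
  (root_edge_search G pr k p).2 <= 16.
Proof.
move=> one_root quick; apply: (@search_cost _ _ _ 14); last first.
  by left; rewrite size_root_list.
move=> r /=; have := edge_search_cost r quick.
by case: (pr _); case: (edge_search G r k p) => [? ?] /=; lia.
Qed.

Lemma root_edge_search_spec G pr k p r w e c :
  root_edge_search G pr k p = (Some (r, w, e), c) ->
  [/\ r < nn G, nroot (nd G r), r != w, e < ne G &
      emark_eqb (emk (ed G e)) k && joins (ed G e) r w].
Proof.
move=> /(@search_some (nat * nat * nat))[r0]; rewrite mem_filter mem_iota.
case/andP=> r0_root /andP[_ r0_lt] /=; case: (pr _) => //.
case E: (edge_search G r0 k p) => [[y|] c0] //= [y_eq]; subst y.
by have [-> w_ne ? ?] := edge_search_spec E; rewrite eq_sym.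
Qed.

Lemma node_search_cost G k : (node_search G k).2 <= 4.
Proof. by apply: (@search_cost _ _ _ 2) => //; right. Qed.

Lemma node_search_spec G k v c : node_search G k = (Some v, c) -> v < nn G.
Proof.
by move=> /(@search_some nat)[x]; rewrite mem_filter mem_iota => /andP[_ /andP[_ ?]] [<-].
Qed.

Lemma wf_graph_ends G e : wf_graph G -> e < ne G ->
  esrc (ed G e) < nn G /\ etgt (ed G e) < nn G.
Proof. by move=> /(all_nthP dedge) wfG /wfG /andP[]. Qed.

Lemma joins_lt G e r w : wf_graph G -> e < ne G -> joins (ed G e) r w -> w < nn G.
Proof.
by move=> /wf_graph_ends ends /ends[? ?] /orP[] /andP[_ /eqP <-].
Qed.

Lemma nn_set_node G v k rt : v < nn G -> nn (set_node G v k rt) = nn G.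
Proof. by move=> v_lt; rewrite /nn size_set_nth; apply/maxn_idPr. Qed.

Lemma nd_set_node G v k rt u : nd (set_node G v k rt) u =
  if u == v then HNode k rt (nlab (nd G v)) else nd G u.
Proof. by rewrite /nd nth_set_nth. Qed.

Lemma set_node_comm G v w kv kw rv rw : v != w ->
  set_node (set_node G v kv rv) w kw rw = set_node (set_node G w kw rw) v kv rv.
Proof.
move=> v_ne_w; rewrite /set_node; congr HGraph.
apply: (@eq_from_nth _ dnode) => [|i _]; first by rewrite !size_set_nth maxnCA.
have [vw wv] : (v == w) = false /\ (w == v) = false.
  by rewrite (negbTE v_ne_w) eq_sym (negbTE v_ne_w).
rewrite !nth_set_nth /= /nd !nth_set_nth /= ?vw ?wv.
by case: (i =P v) => [->|//]; rewrite ?vw ?wv.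
Qed.

Lemma nth_le_count T (x0 : T) (s : seq T) (p : pred T) i : i < size s ->
  p (nth x0 s i) <= count p s.
Proof.
move=> i_lt; case p_i: (p _) => //=.
by rewrite -has_count; apply/(has_nthP x0); exists i.
Qed.

Lemma roots_set_node G v k rt : v < nn G ->
  count nroot (hnodes (set_node G v k rt)) + nroot (nd G v) =
  count nroot (hnodes G) + rt.
Proof.
move=> v_lt; rewrite count_set_nth_ltn //=.
by have := nth_le_count dnode nroot v_lt; rewrite -/(nd G v); lia.
Qed.

Lemma wf_set_node G v k rt : v < nn G -> wf_graph G -> wf_graph (set_node G v k rt).
Proof. by move=> v_lt; rewrite /wf_graph nn_set_node. Qed.

Lemma ne_set_edge G e k : e < ne G -> ne (set_edge G e k) = ne G.
Proof. by move=> e_lt; rewrite /ne size_set_nth; apply/maxn_idPr. Qed.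

Lemma ed_set_edge G e k e' : ed (set_edge G e k) e' =
  if e' == e then HEdge (esrc (ed G e)) (etgt (ed G e)) k (elab (ed G e)) else ed G e'.
Proof. by rewrite /ed nth_set_nth. Qed.

Lemma edge_count_set_edge G e k q : e < ne G ->
  edge_count (set_edge G e k) q + emark_eqb (emk (ed G e)) q =
  edge_count G q + emark_eqb k q.
Proof.
move=> e_lt; rewrite /edge_count count_set_nth_ltn //=.
by have := nth_le_count dedge (fun x => emark_eqb (emk x) q) e_lt; rewrite -/(ed G e); lia.
Qed.

Lemma wf_set_edge G e k : e < ne G -> wf_graph G -> wf_graph (set_edge G e k).
Proof.
move=> e_lt /(all_nthP dedge) wfG; apply/(all_nthP dedge) => i.
rewrite size_set_nth (maxn_idPr e_lt) nth_set_nth /= => i_lt.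
by case: ifP => _; [apply: wfG e_lt | apply: wfG].
Qed.

(** * The DFS invariant and the potential *)

Definition dashed_blue G := forall e, e < ne G -> emark_eqb (emk (ed G e)) EDashed ->
  is_blue (nd G (esrc (ed G e))) && is_blue (nd G (etgt (ed G e))).

Lemma dashed_blue_set_node G v rt : dashed_blue G -> dashed_blue (set_node G v NBlue rt).
Proof.
move=> dashedG e e_lt e_dashed; have /andP[src_blue tgt_blue] := dashedG e e_lt e_dashed.
by rewrite !nd_set_node; apply/andP; split; case: ifP.
Qed.

(* Between two iterations of FORWARD! there is no red edge (reds = 0); inside
   FORWARD the edge just taken by next_edge is red (reds = 1). *)
Definition dfs_inv reds G := [/\ wf_graph G, count nroot (hnodes G) <= 1,
  edge_count G ERed <= reds & dashed_blue G].

Lemma dfs_inv_le1 G : dfs_inv 0 G -> dfs_inv 1 G.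
Proof. by case=> wfG rootsG redsG dashedG; split => //; apply: leq_trans redsG _. Qed.

Lemma dfs_inv_set_edge reds reds' G e k : dfs_inv reds G -> e < ne G ->
  edge_count (set_edge G e k) ERed <= reds' ->
  (emark_eqb k EDashed -> is_blue (nd G (esrc (ed G e))) && is_blue (nd G (etgt (ed G e)))) ->
  dfs_inv reds' (set_edge G e k).
Proof.
case=> wfG rootsG _ dashedG e_lt redsG' new_blue; split => //; first exact: wf_set_edge.
move=> e'; rewrite ne_set_edge // ed_set_edge; case: eqP => [-> _ /new_blue | _]; first by [].
exact: dashedG.
Qed.

Definition pass_root G r w := set_node (set_node G r NBlue false) w NBlue true.

Lemma dfs_inv_pass_root reds G r w : dfs_inv reds G -> nroot (nd G r) -> r != w ->
  r < nn G -> w < nn G -> dfs_inv reds (pass_root G r w).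
Proof.
case=> wfG rootsG redsG dashedG r_root r_ne_w r_lt w_lt.
have w_lt' : w < nn (set_node G r NBlue false) by rewrite nn_set_node.
have := roots_set_node NBlue false r_lt; have := roots_set_node NBlue true w_lt'.
rewrite /pass_root r_root /= => roots2 roots1; split => //.
- by apply: wf_set_node => //; apply: wf_set_node.
- by rewrite /=; lia.
- by do 2 apply: dashed_blue_set_node.
Qed.

Lemma pass_root_blue G r w :
  is_blue (nd (pass_root G r w) r) && is_blue (nd (pass_root G r w) w).
Proof. by rewrite !nd_set_node !eqxx; case: ifP. Qed.

Definition mark_weight k := match k with EUnmarked => 2 | EDashed => 1 | _ => 0 end.

(* An unmarked edge will still be traversed forward and, if it becomes dashed,
   backward; a dashed edge lies on the current DFS path and will be backtracked. *)
Definition potential G := 2 * edge_count G EUnmarked + edge_count G EDashed.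

Lemma potential_set_edge G e k : e < ne G ->
  potential (set_edge G e k) + mark_weight (emk (ed G e)) = potential G + mark_weight k.
Proof.
move=> e_lt; rewrite /potential.
move: (edge_count_set_edge k EUnmarked e_lt) (edge_count_set_edge k EDashed e_lt).
by case: (emk (ed G e)); case: k => /=; lia.
Qed.

Lemma potential_le G : potential G <= 3 * ne G.
Proof.
have count_le k : edge_count G k <= ne G by exact: count_size.
by rewrite /potential; have := count_le EUnmarked; have := count_le EDashed; lia.
Qed.

Lemma node_rule_cost G :
  (try_rule R_init G).2 <= 5 /\ (try_rule R_match G).2 <= 5.
Proof.
rewrite /try_rule; have := node_search_cost G NGrey.
by case: (node_search G NGrey) => [[?|] ?] /=; lia.
Qed.

Lemma rule_cost rl G : dfs_inv 1 G -> (try_rule rl G).2 <= 17.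
Proof.
case=> _ rootsG redsG dashedG.
have search_le k p : edge_search_immediate G k p -> (root_edge_search G is_blue k p).2 <= 16.
  exact: root_edge_search_cost.
have [init_le match_le] := node_rule_cost G.
case: rl; [lia | lia | ..]; rewrite /try_rule;
  [ have := search_le EUnmarked (fun=> true) (or_intror (fun _ _ _ => erefl))
  | have := search_le ERed is_blue (or_introl redsG)
  | have := search_le ERed is_grey (or_introl redsG)
  | have := search_le EDashed is_blue (or_intror dashedG) ];
  by case: root_edge_search => [[[[? ?] ?]|] ?] /=; lia.
Qed.

Lemma next_edge_spec G G' c : dfs_inv 0 G -> try_rule R_next_edge G = (Some G', c) ->
  dfs_inv 1 G' /\ potential G' + 2 = potential G.
Proof.
move=> invG; rewrite /try_rule.
case E: root_edge_search => [[[[r w] e]|] c0] //= [<- _].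
have [_ _ _ e_lt /andP[/emark_eqbP e_unmarked _]] := root_edge_search_spec E.
have := potential_set_edge ERed e_lt; have := edge_count_set_edge ERed ERed e_lt.
rewrite e_unmarked /= => reds' pot'; split; last lia.
by apply: (dfs_inv_set_edge invG e_lt) => //; case: invG => _ _ reds _; lia.
Qed.

Lemma move_spec G G' c : dfs_inv 1 G -> try_rule R_move G = (Some G', c) ->
  dfs_inv 0 G' /\ potential G' = (potential G).+1.
Proof.
move=> invG; rewrite /try_rule.
case E: root_edge_search => [[[[r w] e]|] c0] //= [<- _].
have [r_lt r_root r_ne_w e_lt /andP[/emark_eqbP e_red e_rw]] := root_edge_search_spec E.
have [wfG _ redsG _] := invG.
have inv1 := dfs_inv_pass_root invG r_root r_ne_w r_lt (joins_lt wfG e_lt e_rw).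
have := potential_set_edge (G := pass_root G r w) EDashed e_lt.
have := edge_count_set_edge (G := pass_root G r w) EDashed ERed e_lt.
rewrite -/(pass_root G r w) -[potential (pass_root G r w)]/(potential G).
rewrite -[edge_count (pass_root G r w) _]/(edge_count G ERed) e_red /= => reds' pot'.
split; last lia.
apply: (dfs_inv_set_edge inv1 e_lt); first lia.
move=> _; case/orP: e_rw => /andP[/eqP-> /eqP->]; first exact: pass_root_blue.
by rewrite andbC; exact: pass_root_blue.
Qed.

Lemma ignore_spec G G' c : dfs_inv 1 G -> try_rule R_ignore G = (Some G', c) ->
  dfs_inv 0 G' /\ potential G' = potential G.
Proof.
move=> invG; rewrite /try_rule.
case E: root_edge_search => [[[[r w] e]|] c0] //= [<- _].
have [_ _ _ e_lt /andP[/emark_eqbP e_red _]] := root_edge_search_spec E.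
have := potential_set_edge EBlue e_lt; have := edge_count_set_edge EBlue ERed e_lt.
rewrite e_red /= => reds' pot'; split; last lia.
by apply: (dfs_inv_set_edge invG e_lt) => //; case: invG => _ _ reds _; lia.
Qed.

Lemma back_spec G G' c : dfs_inv 0 G -> try_rule R_back G = (Some G', c) ->
  dfs_inv 0 G' /\ potential G' < potential G.
Proof.
move=> invG; rewrite /try_rule.
case E: root_edge_search => [[[[r w] e]|] c0] //= [<- _].
have [r_lt r_root r_ne_w e_lt /andP[/emark_eqbP e_dashed e_rw]] := root_edge_search_spec E.
have [wfG _ redsG _] := invG.
have inv1 := dfs_inv_pass_root invG r_root r_ne_w r_lt (joins_lt wfG e_lt e_rw).
rewrite set_node_comm 1?eq_sym // -/(pass_root G r w).
have := potential_set_edge (G := pass_root G r w) EBlue e_lt.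
have := edge_count_set_edge (G := pass_root G r w) EBlue ERed e_lt.
rewrite -[potential (pass_root G r w)]/(potential G).
rewrite -[edge_count (pass_root G r w) _]/(edge_count G ERed) e_dashed /= => reds' pot'.
by split; [apply: (dfs_inv_set_edge inv1 e_lt) => //; lia | lia].
Qed.

Lemma init_spec G G' c : try_rule R_init G = (Some G', c) ->
  exists2 v, v < nn G & G' = set_node G v NBlue true.
Proof.
rewrite /try_rule; case E: node_search => [[v|] c0] //= [<- _].
by exists v => //; apply: node_search_spec E.
Qed.

Lemma dfs_inv_init G v : wf_graph G -> all_grey_unrooted_unmarked G -> v < nn G ->
  dfs_inv 0 (set_node G v NBlue true).
Proof.
move=> wfG /andP[grey_nodes unmarked_edges] v_lt.
have count0 T (p : pred T) s : all (predC p) s -> count p s = 0.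
  by rewrite all_predC has_count lt0n negbK => /eqP.
have no_roots : count nroot (hnodes G) = 0.
  by apply: count0; apply: sub_all grey_nodes => x /andP[].
have no_red : edge_count G ERed = 0.
  by apply: count0; apply: sub_all unmarked_edges => x /= /emark_eqbP ->.
have := roots_set_node NBlue true v_lt; rewrite no_roots => roots'.
split; [exact: wf_set_node | by move: roots' => /=; lia | exact: eq_leq no_red |].
apply: dashed_blue_set_node.
move=> e e_lt; have /emark_eqbP := all_nthP dedge unmarked_edges e e_lt.
by rewrite /ed => ->.
Qed.

(** * Commands *)

Lemma eval_mono f f' c G r : f <= f' -> eval f c G = Some r -> eval f' c G = Some r.
Proof.
elim: f f' c G r => [|f IH] [|f'] c G r //= f_le.
case: c => [rs|P Q|P|C P Q|C P Q| | |] //=.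
- case E: (eval f P G) => [[[G1 u1|u|G1 u] c1]|] //; rewrite (IH _ _ _ _ f_le E) //.
  by case E2: (eval f Q G1) => [y|] //; rewrite (IH _ _ _ _ f_le E2).
- case E: (eval f P G) => [[[G1 u1|u|G1 u] c1]|] //; rewrite (IH _ _ _ _ f_le E) //.
  by case E2: (eval f (CLoop P) G1) => [y|] //; rewrite (IH _ _ _ _ f_le E2).
- case E: (eval f C G) => [[[G1 u1|u|G1 u] c1]|] //; rewrite (IH _ _ _ _ f_le E) //.
  + by case E2: (eval f P G1) => [y|] //; rewrite (IH _ _ _ _ f_le E2).
  + by case E2: (eval f Q G) => [y|] //; rewrite (IH _ _ _ _ f_le E2).
- case E: (eval f C G) => [[[G1 u1|u|G1 u] c1]|] //; rewrite (IH _ _ _ _ f_le E) //.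
  + by case E2: (eval f P G) => [y|] //; rewrite (IH _ _ _ _ f_le E2).
  + by case E2: (eval f Q G) => [y|] //; rewrite (IH _ _ _ _ f_le E2).
Qed.

Lemma eval_seq_ok f1 f2 P Q G G1 u c1 o c2 :
  eval f1 P G = Some (OOk G1 u, c1) -> eval f2 Q G1 = Some (o, c2) ->
  eval (maxn f1 f2).+1 (CSeq P Q) G = Some (add_changes u o, 1 + c1 + c2).
Proof.
by move=> E1 E2 /=; rewrite (eval_mono (leq_maxl f1 f2) E1) (eval_mono (leq_maxr f1 f2) E2).
Qed.

Lemma eval_loop_ok f1 f2 P G G1 u c1 o c2 :
  eval f1 P G = Some (OOk G1 u, c1) -> eval f2 (CLoop P) G1 = Some (o, c2) ->
  eval (maxn f1 f2).+1 (CLoop P) G = Some (add_changes u o, 1 + c1 + c2).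
Proof.
by move=> E1 E2 /=; rewrite (eval_mono (leq_maxl f1 f2) E1) (eval_mono (leq_maxr f1 f2) E2).
Qed.

Lemma eval_try_ok f1 f2 C P Q G G1 u c1 o c2 :
  eval f1 C G = Some (OOk G1 u, c1) -> eval f2 P G1 = Some (o, c2) ->
  eval (maxn f1 f2).+1 (CTry C P Q) G = Some (add_changes u o, 1 + c1 + c2).
Proof.
by move=> E1 E2 /=; rewrite (eval_mono (leq_maxl f1 f2) E1) (eval_mono (leq_maxr f1 f2) E2).
Qed.

Section AmortizedLoop.

Variables (inv : hgraph -> Prop) (phi : hgraph -> nat) (a b : nat) (P : cmd).

Definition amortized_step G o t :=
  match o with
  | OOk G' _ => inv G' /\ 1 + t + a * phi G' <= a * phi G
  | OFail u => 1 + t + u <= b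
  | OBrk G' _ => [/\ inv G', phi G' <= phi G & 1 + t + a * phi G' <= a * phi G + b]
  end.

Hypothesis body_step : forall G, inv G ->
  exists f o t, eval f P G = Some (o, t) /\ amortized_step G o t.

Lemma loop_amortized G : inv G -> exists f G' u t,
  eval f (CLoop P) G = Some (OOk G' u, t) /\
  [/\ inv G', phi G' <= phi G & t + a * phi G' <= a * phi G + b].
Proof.
have [n] := ubnP (phi G); elim: n G => // n IH G /ltnSE phi_le invG.
have [f [o [t [evP step]]]] := body_step invG.
case: o evP step => [G1 u|u|G1 u] evP /=.
- case=> inv1 paid; have : a * phi G1 < a * phi G by lia.
  rewrite ltn_mul2l => /andP[_ phi_lt].
  have [f' [G' [u' [t' [ev' [inv' le' cost']]]]]] := IH G1 (leq_trans phi_lt phi_le) inv1.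
  exists (maxn f f').+1, G', (u + u'), (1 + t + t').
  by split; [exact: eval_loop_ok evP ev' | split => //; lia].
- move=> cost; exists f.+1, G, 0, (1 + t + u).
  by split; [rewrite /= evP | split => //; lia].
- case=> inv1 le1 cost; exists f.+1, G1, u, (1 + t).
  by split; [rewrite /= evP | split => //; lia].
Qed.

End AmortizedLoop.

Lemma forward_step G : dfs_inv 0 G -> exists f o t,
  eval f FORWARD G = Some (o, t) /\ amortized_step (dfs_inv 0) potential 64 64 G o t.
Proof.
move=> invG; exists 2; rewrite /FORWARD /=.
have := rule_cost R_next_edge (dfs_inv_le1 invG).
case E1: (try_rule R_next_edge G) => [[G1|] c1] /= cost1; last first.
  by do 2 eexists; split; first reflexivity; rewrite /=; lia.
have [inv1 pot1] := next_edge_spec invG E1.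
have := rule_cost R_move inv1; have := rule_cost R_ignore inv1.
case E2: (try_rule R_move G1) => [[G2|] c2] /= cost_ignore cost_move.
  have [inv2 pot2] := move_spec inv1 E2.
  by do 2 eexists; split; first reflexivity; rewrite /=; split => //; lia.
case E3: (try_rule R_ignore G1) cost_ignore => [[G3|] c3] /= cost_ignore.
  have [inv3 pot3] := ignore_spec inv1 E3.
  by do 2 eexists; split; first reflexivity; rewrite /=; split => //; lia.
by do 2 eexists; split; first reflexivity; rewrite /=; lia.
Qed.

Lemma try_back_step G : dfs_inv 0 G -> exists o t,
  eval 3 (CTry (CCall [:: R_back]) CSkip CBreak) G = Some (o, t) /\ t <= 22 /\
  (o = OBrk G 0 \/ exists G' u, [/\ o = OOk G' u, dfs_inv 0 G' & potential G' < potential G]).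
Proof.
move=> invG; rewrite /=; have := rule_cost R_back (dfs_inv_le1 invG).
case E: (try_rule R_back G) => [[G'|] c] /= cost.
  have [inv' pot'] := back_spec invG E.
  by do 2 eexists; split; first reflexivity; split; [lia | right; do 2 eexists].
by do 2 eexists; split; first reflexivity; split; [lia | left].
Qed.

Lemma dfs_step G : dfs_inv 0 G -> exists f o t,
  eval f DFS G = Some (o, t) /\ amortized_step (dfs_inv 0) potential 128 128 G o t.
Proof.
move=> invG.
have [f1 [G1 [u1 [t1 [ev1 [inv1 pot1 cost1]]]]]] := loop_amortized forward_step invG.
have [o [t [ev2 [cost2 back]]]] := try_back_step inv1.
exists (maxn f1 3).+1, (add_changes u1 o), (1 + t1 + t); split; first exact: eval_seq_ok ev1 ev2.
case: back => [-> | [G2 [u2 [-> inv2 pot2]]]] /=; first by split => //; lia.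
by split => //; lia.
Qed.

Lemma check_cost G : exists o t, eval 3 Check G = Some (o, t) /\ t <= 10.
Proof.
have [_ match_le] := node_rule_cost G; rewrite /Check /=.
case: (try_rule R_match G) match_le => [[?|] c] /= c_le;
  by do 2 eexists; (split; first reflexivity); lia.
Qed.

Theorem mainTheorem2 :
  exists c : nat, forall G : hgraph,
    wf_graph G -> all_grey_unrooted_unmarked G ->
    exists (fuel : nat) (o : outcome) (t : nat),
      eval fuel is_connected G = Some (o, t) /\ t <= c * (nn G + ne G + 1).
Proof.
exists 384 => G wfG initG.
have [init_le _] := node_rule_cost G.
case E: (try_rule R_init G) init_le => [[G1|] c] /= init_le; last first.
  by exists 2; do 2 eexists; split; [rewrite /= E; reflexivity | lia].
have [v v_lt G1_eq] := init_spec E; subst G1.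
have ev_init : eval 1 (CCall [:: R_init]) G = Some (OOk (set_node G v NBlue true) 1, 1 + (1 + c)).
  by rewrite /= E.
have [f [G' [u [t [ev_dfs [_ _ cost_dfs]]]]]] :=
  loop_amortized dfs_step (dfs_inv_init wfG initG v_lt).
have [o [t' [ev_check cost_check]]] := check_cost G'.
do 3 eexists; split; first exact: eval_try_ok ev_init (eval_seq_ok ev_dfs ev_check).
have := potential_le G; rewrite -[potential (set_node _ _ _ _)]/(potential G) in cost_dfs.
lia.
Qed.
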